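(* Let $N = n+1\ge 4$ be even, let $\boldsymbol{\lambda} = (\lambda_1,\dots,\lambda_N) \in \Lambda_N$, let $\mathbf{v}_0 = \mathbf{0}$, $\mathbf{v}_i = \lambda_i(\mathbf{e}_{i-1}-\mathbf{e}_i)$ for $1\le i\le N$, $V_N=\{\mathbf{v}_0,\dots,\mathbf{v}_N\}$, and $\Delta_+(G^{\mathbf{0}}_{\boldsymbol{\lambda}}) = \{\operatorname{conv}(V_N \setminus \{\mathbf{v}_i\}) \mid \lambda_i = \lambda_1\}$. Lift each simplex $T$ of $\Delta_+(G^{\mathbf{0}}_{\boldsymbol{\lambda}})$ to $\Omega_\omega(T) = \operatorname{conv}\{(\mathbf{a},\omega(\mathbf{a})) \mid \mathbf{a} \text{ a vertex of } T\} \subset \mathbb{R}^{n+1}$. If $\lambda_1 = 1$, then the upward-pointing inner normal vectors (with last coordinate $1$) of the simplices in $\Omega_\omega(\Delta_+(G^{\mathbf{0}}_{\boldsymbol{\lambda}}))$ are $\mathbf{x}_{\boldsymbol{\lambda}} = (x_1,\dots,x_{n+1})$ where $x_i = \sum_{j=1}^i \lambda_j$ for $1 \le i < n+1$ and $x_{n+1} = 1$, together with \[ \mathbf{y}_{\boldsymbol{\lambda},j} = \mathbf{x}_{\boldsymbol{\lambda}} + \sum_{k=1}^{j-1}\mathbf{e}_k \] for each $j > 1$ such that $\lambda_j = 1$ (here $\mathbf{e}_k$ denotes the standard basis vectors of $\mathbb{R}^{n+1}$). If $\lambda_1 = -1$, then the upward-pointing inner normal vectors are $\mathbf{x}_{\boldsymbol{\lambda}}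 = \sigma(\mathbf{x}_{-\boldsymbol{\lambda}})$ and $\mathbf{y}_{\boldsymbol{\lambda},j} = \sigma(\mathbf{y}_{-\boldsymbol{\lambda},j})$ for each $j>1$ with $\lambda_j < 0$, where $\sigma:\mathbb{R}^{n+1}\to\mathbb{R}^{n+1}$ is the map negating the first $n$ coordinates.
   Context: $\mathbf{e}_1,\dots,\mathbf{e}_n$ is the standard basis of $\mathbb{R}^n$ with the convention $\mathbf{e}_0 = \mathbf{e}_N = \mathbf{0}$. For even $N$, $\Lambda_N = \{(\lambda_1,\dots,\lambda_N) \in \{-1,1\}^N \mid \sum_i \lambda_i = 0\}$. The cycle graph $C_N$ has vertices $0,\dots,N-1$ and edges $\{0,1\},\{1,2\},\dots,\{N-2,N-1\},\{N-1,0\}$; $S_{C_N} = \{\mathbf{0}\} \cup \{\mathbf{e}_i - \mathbf{e}_j \mid \{i,j\} \text{ an edge of } C_N\}$. The height function $\omega: S_{C_N}\to\mathbb{Z}$ is $\omega(\mathbf{0}) = 0$, $\omega(\pm\mathbf{e}_1) = 2$, and $\omega(\mathbf{a}) = 1$ otherwise. A vector in $\mathbb{R}^{n+1}$ is upward-pointing if its last coordinate is positive. *)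

(* Vectors of R^m are row vectors 'rV[R]_m; the paper's
   1-based coordinate i corresponds to the 0-based ordinal i-1. *)
From HB Require Import structures.
From mathcomp Require Import all_boot all_order all_algebra.
Unset Printing Implicit Defensive.
Import Order.TTheory GRing.Theory Num.Theory.
Local Open Scope ring_scope.

(* Lambda_N: sign vectors (lambda_1,...,lambda_N) in {-1,1}^N with zero sum.
   A sign vector is given as lam : nat -> int, only lam 1, ..., lam N matter. *)
Definition in_Lambda (N : nat) (lam : nat -> int) : Prop :=
  (forall i, (1 <= i <= N)%N -> lam i = 1 \/ lam i = -1) /\
  \sum_(1 <= i < N.+1) lam i = 0.

(* standard basis vector e_k of R^m (1-based);  e_k = 0 when k = 0 or k > m,
   in particular e_0 = e_N = 0 for m = n = N - 1 *)
Definition ebasis (R : realFieldType) (m k : nat) : 'rV[R]_m :=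
  \row_(j < m) (if j.+1 == k then 1 else 0).

Definition vv (R : realFieldType) (n : nat) (lam : nat -> int) (k : nat) : 'rV[R]_n :=
  if k is k'.+1 then (lam k)%:~R *: (ebasis R n k' - ebasis R n k) else 0.

(* S_{C_N} = {0} U {e_i - e_j | {i,j} edge of C_N}  (with e_0 = 0) *)
Definition S_CN (R : realFieldType) (n : nat) (a : 'rV[R]_n) : Prop :=
  a = 0 \/ exists i j : nat, (i < n.+1)%N /\ (j < n.+1)%N /\
     (j == (i.+1 %% n.+1)%N \/ i == (j.+1 %% n.+1)%N) /\ a = ebasis R n i - ebasis R n j.

(* height function omega on S_{C_N}: omega 0 = 0, omega (+-e_1) = 2, 1 otherwise.
   (It is only ever evaluated on elements of S_{C_N}, namely on the v_k.) *)
Definition omega (R : realFieldType) (n : nat) (a : 'rV[R]_n) : R :=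
  if a == 0 then 0
  else if (a == ebasis R n 1) || (a == - ebasis R n 1) then 2 else 1.

Definition liftw (R : realFieldType) (n : nat) (a : 'rV[R]_n) : 'rV[R]_n.+1 :=
  \row_(j < n.+1) (if unlift ord_max j is Some k then a 0 k else omega R n a).

Definition dotp (R : realFieldType) (m : nat) (u w : 'rV[R]_m) : R :=
  \sum_(j < m) u 0 j * w 0 j.

Definition up_normal (R : realFieldType) (m : nat) (P : seq 'rV[R]_m.+1)
    (u : 'rV[R]_m.+1) : Prop :=
  u 0 ord_max = 1 /\ forall p q, p \in P -> q \in P -> dotp R m.+1 (p - q) u = 0.

(* vertices of Omega_omega(conv(V_N \ {v_i})), N = n+1 *)
Definition lifted_simplex (R : realFieldType) (n : nat) (lam : nat -> int) (i : nat)
    : seq 'rV[R]_n.+1 :=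
  [seq liftw R n (vv R n lam k) | k <- iota 0 n.+2 & k != i].

Definition Delta_plus_normal (R : realFieldType) (n : nat) (lam : nat -> int)
    (u : 'rV[R]_n.+1) : Prop :=
  exists i, (1 <= i <= n.+1)%N /\ lam i = lam 1%N /\
    up_normal R n (lifted_simplex R n lam i) u.

Definition xvec (R : realFieldType) (n : nat) (lam : nat -> int) : 'rV[R]_n.+1 :=
  \row_(j < n.+1) (if (j < n)%N then (\sum_(1 <= k < j.+2) lam k)%:~R else 1).

Definition yvec (R : realFieldType) (n : nat) (lam : nat -> int) (j : nat) : 'rV[R]_n.+1 :=
  xvec R n lam + \sum_(1 <= k < j) ebasis R n.+1 k.

Definition sigma (R : realFieldType) (n : nat) (u : 'rV[R]_n.+1) : 'rV[R]_n.+1 :=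
  \row_(j < n.+1) (if (j < n)%N then - u 0 j else u 0 j).

(* Let u have last coordinate 1 and write u_0 = u_N = 0 for the missing
   horizontal coordinates.  Since the lifted origin is a vertex of every lifted
   simplex, u is normal to the simplex omitting v_i iff it is orthogonal to each
   lifted v_k, k <> i, i.e. lambda_k (u_(k-1) - u_k) + omega(v_k) = 0, i.e.
   (as lambda_k^2 = 1) u_k = u_(k-1) + lambda_k omega(v_k).  This recurrence,
   holding for all k but i, forces u to be the partial sums of
   lambda_k omega(v_k) with a single jump at i, whose size is fixed by u_N = 0.
   As omega(v_k) = 1 except omega(v_1) = 2, and the lambda_k sum to 0, this
   gives u_k = x_k + lambda_1 [k < i]: that is x_lambda for i = 1, and
   y_(lambda,i), resp. sigma(y_(-lambda,i)), for i > 1. *)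

From mathcomp Require Import all_boot all_order all_algebra.
From mathcomp Require Import zify ring.
Import Order.TTheory GRing.Theory Num.Theory.
Local Open Scope ring_scope.

Lemma sign_step {R : comPzRingType} {l a b h : R} :
  l * l = 1 -> l * (a - b) + h = 0 <-> b = a + l * h.
Proof.
move=> hl; split=> [E|->].
  have -> : b = a + l * h - l * (l * (a - b) + h) + (l * l - 1) * (a - b).
    by ring.
  by rewrite hl subrr mul0r addr0 E mulr0 subr0.
by rewrite opprD addrA subrr sub0r mulrN mulrA hl mul1r addNr.
Qed.

Lemma skip_recurrence {V : zmodType} (d f : nat -> V) (N i : nat) :
  (1 <= i <= N)%N -> f 0%N = 0 -> f N = 0 ->
  (forall k, (1 <= k <= N)%N -> k != i -> f k = f k.-1 + d k) <->
  (forall k, (0 < k < N)%N -> f k =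
     \sum_(1 <= j < k.+1) d j - (if (i <= k)%N then \sum_(1 <= j < N.+1) d j else 0)).
Proof.
set P := fun k => \sum_(1 <= j < k.+1) d j.
have P0 : P 0%N = 0 by rewrite /P big_geq.
have PS k : P k.+1 = P k + d k.+1 by rewrite /P big_nat_recr.
move=> hi f0 fN; split=> [rec | closed].
  set c := P i - f i.
  have jump k : (k <= N)%N -> f k = P k - (if (i <= k)%N then c else 0).
    elim: k => [|k IH] hk; first by rewrite f0 P0 ifN ?subr0 //; lia.
    have [eki|hki] := eqVneq k.+1 i; first by rewrite eki leqnn /c subKr.
    rewrite rec ?hk // IH ?(ltnW hk) // PS addrAC.
    by rewrite [(i <= k.+1)%N]leq_eqVlt [i == _]eq_sym (negbTE hki).
  have cN : c = P N.
    have := jump N (leqnn N); rewrite fN ifT; last by case/andP: hi.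
    by move/eqP; rewrite eq_sym subr_eq0 eq_sym => /eqP.
  by move=> k /andP[_ /ltnW hk]; rewrite jump // cN.
have {}closed k : (k <= N)%N -> f k = P k - (if (i <= k)%N then P N else 0).
  move=> hk; have [->|k0] := posnP k; first by rewrite f0 P0 ifN ?subr0 //; lia.
  have [->|kN] := eqVneq k N; first by rewrite fN ifT ?subrr //; lia.
  by apply: closed; lia.
case=> // k /andP[_ hk] hki.
rewrite !closed ?(ltnW hk) // PS addrAC.
by rewrite [(i <= k.+1)%N]leq_eqVlt [i == _]eq_sym (negbTE hki).
Qed.

Lemma dotpB (R : realFieldType) (m : nat) (p q u : 'rV[R]_m) :
  dotp R m (p - q) u = dotp R m p u - dotp R m q u.
Proof. by rewrite /dotp -sumrB; apply: eq_bigr => j _; rewrite !mxE mulrBl. Qed.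

Lemma dotp0 (R : realFieldType) (m : nat) (u : 'rV[R]_m) : dotp R m 0 u = 0.
Proof. by rewrite /dotp big1 // => j _; rewrite mxE mul0r. Qed.

Lemma orthogonal_diffs (R : realFieldType) (m : nat) (P : seq 'rV[R]_m) (u : 'rV[R]_m) :
  0 \in P ->
  (forall p q, p \in P -> q \in P -> dotp R m (p - q) u = 0) <->
  (forall p, p \in P -> dotp R m p u = 0).
Proof.
move=> P0; split=> [orth p Pp | orth p q Pp Pq].
  by rewrite -[p]subr0 orth.
by rewrite dotpB !orth // subrr.
Qed.

Definition psum (R : realFieldType) (lam : nat -> int) (k : nat) : R :=
  (\sum_(1 <= j < k.+1) lam j)%:~R.

Lemma psumN (R : realFieldType) (lam : nat -> int) (k : nat) :
  psum R (fun j => - lam j) k = - psum R lam k.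
Proof. by rewrite /psum sumrN intrN. Qed.

Section HorizontalCoordinates.
Variables (R : realFieldType) (n : nat).

(* 1-based, with u_0 = u_N = 0 mirroring the convention e_0 = e_N = 0. *)
Definition hcoord (u : 'rV[R]_n.+1) (k : nat) : R :=
  if (0 < k < n.+1)%N then u 0 (inord k.-1) else 0.

Definition hrow (f : nat -> R) : 'rV[R]_n.+1 :=
  \row_(j < n.+1) if (j < n)%N then f j.+1 else 1.

Lemma hcoordE (u : 'rV[R]_n.+1) (j : 'I_n.+1) : (j < n)%N -> hcoord u j.+1 = u 0 j.
Proof. by move=> jn; rewrite /hcoord /= ltnS jn inord_val. Qed.

Lemma eq_hrow (u : 'rV[R]_n.+1) (f : nat -> R) :
  u = hrow f <-> u 0 ord_max = 1 /\ forall k, (0 < k < n.+1)%N -> hcoord u k = f k.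
Proof.
split=> [->|[u1 uf]].
  split=> [|k /andP[k0 kn]]; first by rewrite mxE ltnn.
  case: k k0 kn => // k _ kn; rewrite ltnS in kn.
  by rewrite /hcoord /= ltnS kn mxE inordK ?kn // leqW.
apply/rowP => j; rewrite mxE; case: ifP => jn; first by rewrite -hcoordE ?uf.
suff -> : j = ord_max by [].
by apply/val_inj/eqP; rewrite /= eqn_leq -ltnS ltn_ord leqNgt jn.
Qed.

Lemma sigma_hrow (f : nat -> R) : sigma R n (hrow f) = hrow (fun k => - f k).
Proof. by apply/rowP => j; rewrite !mxE; case: (j < n)%N. Qed.

Lemma ebasis0 (m : nat) : ebasis R m 0 = 0.
Proof. by apply/rowP => j; rewrite !mxE. Qed.

Lemma sum_ebasis_coord (m : nat) (j : 'I_m) (k : nat) :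
  (\sum_(1 <= i < k) ebasis R m i) 0 j = (j.+1 < k)%:R.
Proof.
rewrite summxE; under eq_bigr do rewrite mxE eq_sym.
by rewrite -big_mkcond big_nat1_eq /=; case: (_ < k)%N.
Qed.

Lemma yvec_hrow (lam : nat -> int) (j : nat) : (j <= n.+1)%N ->
  yvec R n lam j = hrow (fun k => psum R lam k + (k < j)%:R).
Proof.
move=> jN; apply/rowP => l; rewrite !mxE sum_ebasis_coord; case: ifP => // ln.
by rewrite ltnNge (leq_trans jN) ?addr0 // ltnS leqNgt ln.
Qed.

Lemma xvec_yvec1 (lam : nat -> int) : xvec R n lam = yvec R n lam 1.
Proof. by rewrite /yvec big_geq // addr0. Qed.

Lemma dotp_liftw (a : 'rV[R]_n) (u : 'rV[R]_n.+1) :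
  dotp R n.+1 (liftw R n a) u =
  \sum_(j < n) a 0 j * hcoord u j.+1 + omega R n a * u 0 ord_max.
Proof.
rewrite /dotp big_ord_recr /= !mxE unlift_none; congr (_ + _).
apply: eq_bigr => j _.
have -> : widen_ord (leqnSn n) j = lift ord_max j by apply/val_inj; rewrite [RHS]lift_max.
by rewrite mxE liftK -hcoordE // lift_max.
Qed.

Lemma hdot_ebasis (u : 'rV[R]_n.+1) (k : nat) :
  \sum_(j < n) ebasis R n k 0 j * hcoord u j.+1 = hcoord u k.
Proof.
under eq_bigr do rewrite mxE (fun_if (fun x => x * _)) mul1r mul0r.
rewrite -big_mkcond /=; case: k => [|k]; first by rewrite big_pred0.
under eq_bigl do rewrite eqSS.
by rewrite (big_ord1_eq _ (fun i => hcoord u i.+1)) /hcoord /= ltnS; case: (k < n)%N.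
Qed.

End HorizontalCoordinates.

Arguments hcoord {R n} u k.

Section LiftedSimplices.
Variables (R : realFieldType) (n : nat) (lam : nat -> int).

Lemma liftw_vv0 : liftw R n (vv R n lam 0) = 0.
Proof.
apply/rowP => j; rewrite !mxE.
by case: unlift => [k|]; rewrite ?mxE // /omega eqxx.
Qed.

Lemma up_normal_lifted_simplex (u : 'rV[R]_n.+1) (i : nat) : (0 < i)%N ->
  up_normal R n (lifted_simplex R n lam i) u <->
  u 0 ord_max = 1 /\ forall k, (0 < k < n.+2)%N -> k != i ->
    dotp R n.+1 (liftw R n (vv R n lam k)) u = 0.
Proof.
move=> i0; rewrite /up_normal orthogonal_diffs; last first.
  by apply/mapP; exists 0%N; rewrite ?liftw_vv0 // mem_filter mem_iota eq_sym -lt0n i0.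
split=> -[u1 orth]; split=> //.
  move=> k /andP[k0 kN] ki.
  by apply: orth; apply/map_f; rewrite mem_filter mem_iota ki.
move=> p /mapP[k]; rewrite mem_filter mem_iota => /andP[ki kN] ->.
by case: k ki kN => [|k] ki kN; [rewrite liftw_vv0 dotp0 | apply: orth].
Qed.

Hypothesis n2 : (2 <= n)%N.
Hypothesis lam_sign : forall k, (0 < k < n.+2)%N -> lam k = 1 \/ lam k = -1.
Hypothesis lam_sum0 : \sum_(1 <= k < n.+2) lam k = 0.

Definition height (k : nat) : R := if k == 1%N then 2 else 1.

Lemma lam_sqr k : (0 < k < n.+2)%N -> (lam k)%:~R * (lam k)%:~R = 1 :> R.
Proof. by case/lam_sign => ->; rewrite ?mulrN1z ?mulrNN mulr1. Qed.

Lemma lam_neq0 k : (0 < k < n.+2)%N -> (lam k)%:~R != 0 :> R.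
Proof.
move/lam_sqr; apply: contra_eq_neq => ->.
by rewrite mul0r eq_sym oner_neq0.
Qed.

Lemma omega_eq1 (a : 'rV[R]_n) (j : 'I_n) : (0 < j)%N -> a 0 j != 0 -> omega R n a = 1.
Proof.
move=> j0 aj; have ne (b : 'rV[R]_n) : a 0 j != b 0 j -> (a == b) = false.
  by apply: contraNF => /eqP ->.
have j1 : (j.+1 == 1)%N = false by case: (nat_of_ord j) j0.
by rewrite /omega !ne //; rewrite ?mxE ?j1 ?oppr0.
Qed.

Lemma omega_vv k : (0 < k < n.+2)%N -> omega R n (vv R n lam k) = height k.
Proof.
move=> hk; have lk := lam_neq0 _ hk.
case: k hk lk => [//|[|k] hk lk].
  have e1 : ebasis R n 1 != 0.
    apply/eqP => /rowP/(_ (Ordinal (ltnW n2))); rewrite !mxE => /eqP.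
    by rewrite oner_eq0.
  rewrite /vv ebasis0 sub0r /omega scalerN oppr_eq0.
  case: (lam_sign _ hk) => ->; rewrite ?scale1r ?scaleN1r ?opprK ?oppr_eq0.
    by rewrite (negbTE e1) eqxx orbT.
  by rewrite (negbTE e1) eqxx.
case: k hk lk => [|k] hk lk.
  by apply: (@omega_eq1 _ (Ordinal n2)) => //; rewrite !mxE /= sub0r mulrN1 oppr_eq0.
apply: (@omega_eq1 _ (Ordinal (hk : (k.+1 < n)%N))) => //.
by rewrite !mxE /= eqxx ltn_eqF // subr0 mulr1.
Qed.

Lemma dotp_lift_vv (u : 'rV[R]_n.+1) k : (0 < k < n.+2)%N ->
  dotp R n.+1 (liftw R n (vv R n lam k)) u =
  (lam k)%:~R * (hcoord u k.-1 - hcoord u k) + height k * u 0 ord_max.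
Proof.
move=> hk; rewrite dotp_liftw omega_vv //; congr (_ + _).
case: k hk => // k _; rewrite -(hdot_ebasis _ _ u k) -(hdot_ebasis _ _ u k.+1).
rewrite -sumrB mulr_sumr; apply: eq_bigr => j _; rewrite !mxE; ring.
Qed.

Lemma up_normal_recurrence (u : 'rV[R]_n.+1) i : (0 < i)%N ->
  up_normal R n (lifted_simplex R n lam i) u <->
  u 0 ord_max = 1 /\ forall k, (0 < k < n.+2)%N -> k != i ->
    hcoord u k = hcoord u k.-1 + (lam k)%:~R * height k.
Proof.
move=> i0; rewrite up_normal_lifted_simplex //.
split=> -[u1 orth]; split=> // k hk ki.
  move: (orth k hk ki); rewrite dotp_lift_vv // u1 mulr1.
  by move/(sign_step (lam_sqr _ hk)).
by rewrite dotp_lift_vv // u1 mulr1; apply/(sign_step (lam_sqr _ hk))/orth.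
Qed.

Lemma sum_lam_height k : (0 < k)%N ->
  \sum_(1 <= j < k.+1) (lam j)%:~R * height j = psum R lam k + (lam 1%N)%:~R.
Proof.
elim: k => // -[_ _ | k IH _].
  by rewrite big_nat1 /psum big_nat1 /height /=; ring.
by rewrite big_nat_recr // IH // /psum [in RHS]big_nat_recr //= intrD /height /=; ring.
Qed.

Definition simplex_normal (i : nat) : 'rV[R]_n.+1 :=
  hrow R n (fun k => psum R lam k + (lam 1%N)%:~R * (k < i)%:R).

Lemma up_normal_simplex_normal (u : 'rV[R]_n.+1) i : (0 < i < n.+2)%N ->
  up_normal R n (lifted_simplex R n lam i) u <-> u = simplex_normal i.
Proof.
move=> hi; have /andP[i0 _] := hi.
rewrite up_normal_recurrence // eq_hrow.
have fN : hcoord u n.+1 = 0 by rewrite /hcoord ltnn andbF.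
have rec :=
  skip_recurrence (fun k => (lam k)%:~R * height k) (hcoord u) n.+1 i hi erefl fN.
have jump k : (0 < k)%N ->
    \sum_(1 <= j < k.+1) (lam j)%:~R * height j -
    (if (i <= k)%N then \sum_(1 <= j < n.+2) (lam j)%:~R * height j else 0) =
    psum R lam k + (lam 1%N)%:~R * (k < i)%:R.
  move=> k0; rewrite !sum_lam_height // {2}/psum lam_sum0 add0r ltnNge.
  by case: (i <= k)%N; rewrite /= ?mulr0 ?addr0 ?addrK ?subr0 ?mulr1.
split=> -[u1 h]; split=> //.
  by move=> k /[dup] /andP[k0 _] hk; rewrite (rec.1 h) // jump.
by apply/rec => k /[dup] /andP[k0 _] hk; rewrite h // jump.
Qed.

Lemma Delta_plus_normalE (Q : nat -> Prop) (w : nat -> 'rV[R]_n.+1) (u : 'rV[R]_n.+1) :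
  (forall i, (1 < i < n.+2)%N -> lam i = lam 1%N <-> Q i) ->
  (forall i, (0 < i < n.+2)%N -> simplex_normal i = w i) ->
  Delta_plus_normal R n lam u <->
  u = w 1%N \/ exists j, (1 < j <= n.+1)%N /\ Q j /\ u = w j.
Proof.
move=> hQ hw; split.
  move=> [i [hi [li /(up_normal_simplex_normal _ _ hi)]]]; rewrite hw // => ->.
  have [->|i1] := eqVneq i 1%N; [by left | right].
  have hi' : (1 < i < n.+2)%N by rewrite ltn_neqAle eq_sym i1.
  by exists i; split; [|split; [apply/hQ|]].
case=> [->|[j [hj [qj ->]]]].
  by exists 1%N; split; [|split; [|apply/up_normal_simplex_normal; rewrite ?hw]].
have hj' : (0 < j < n.+2)%N by lia.
exists j; split=> //; split; first exact/hQ.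
by apply/up_normal_simplex_normal; rewrite ?hw.
Qed.

Lemma simplex_normal_pos i : lam 1%N = 1 -> (i <= n.+1)%N ->
  simplex_normal i = yvec R n lam i.
Proof. by move=> l1 iN; rewrite yvec_hrow //; apply/rowP => j; rewrite !mxE l1 mul1r. Qed.

Lemma simplex_normal_neg i : lam 1%N = -1 -> (i <= n.+1)%N ->
  simplex_normal i = sigma R n (yvec R n (fun k => - lam k) i).
Proof.
move=> l1 iN; rewrite yvec_hrow // sigma_hrow; apply/rowP => j.
by rewrite !mxE psumN l1 mulN1r opprD opprK.
Qed.

End LiftedSimplices.

Arguments Delta_plus_normalE {R n lam}.

Theorem lemma5p4 (R : realFieldType) (n : nat) (lam : nat -> int)
    (hN4 : (4 <= n.+1)%N) (hNeven : ~~ odd n.+1) (hlam : in_Lambda n.+1 lam) :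
  (lam 1%N = 1 ->
     forall u : 'rV[R]_n.+1, Delta_plus_normal R n lam u <->
       (u = xvec R n lam \/
        exists j : nat, (1 < j <= n.+1)%N /\ lam j = 1 /\ u = yvec R n lam j)) /\
  (lam 1%N = -1 ->
     forall u : 'rV[R]_n.+1, Delta_plus_normal R n lam u <->
       (u = sigma R n (xvec R n (fun k => - lam k)) \/
        exists j : nat, (1 < j <= n.+1)%N /\ lam j < 0 /\
          u = sigma R n (yvec R n (fun k => - lam k) j))).
Proof.
have n2 : (2 <= n)%N by apply: ltnW.
case: hlam => lam_sign lam_sum0.
split=> l1 u; rewrite xvec_yvec1.
  apply: (Delta_plus_normalE n2 lam_sign lam_sum0 (fun j => lam j = 1)) => i /andP[i1 iN].
    by rewrite l1.
  exact: simplex_normal_pos.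
apply: (Delta_plus_normalE n2 lam_sign lam_sum0 (fun j => lam j < 0)) => i /andP[i1 iN].
  by rewrite l1; case: (lam_sign i) => [|->|->] //; rewrite (ltnW i1).
exact: simplex_normal_neg.
Qed.
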